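(* Let $\mathbb{K}$ be a field, let $P_1, P_2 \in \mathbb{K}[X]$ be irreducible, let $m \geq 1$, and let $f_m : \mathbb{K}[X]/(P_1^m) \to \mathbb{K}[X]/(P_2^m)$ be a ring isomorphism stabilizing $\mathbb{K}$. Let $R \in \mathbb{K}[X]$ be such that $f_m$ sends the class of $X$ to the class of $R$, and let $Q$ be the remainder of the Euclidean division of $R$ by $P_2$ (which does not depend on the choice of $R$). If $Q' \neq 0$, then the rings $\mathbb{K}[X]/(P_1^n)$ and $\mathbb{K}[X]/(P_2^n)$ are isomorphic for all $n \geq 1$.
   Context: A ring homomorphism $f : A \to B$ between $\mathbb{K}$-algebras stabilizes $\mathbb{K}$ if there is a field automorphism $\sigma_f$ of $\mathbb{K}$ with $f(a) = \sigma_f(a)$ for all $a \in \mathbb{K}$ (with $\mathbb{K}$ identified with its image in $A$ and $B$). $Q'$ denotes the formal derivative of $Q$. *)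

From HB Require Import structures.
From mathcomp Require Import all_boot all_algebra.
Set Implicit Arguments. Unset Strict Implicit. Unset Printing Implicit Defensive.
Import GRing.Theory.
Local Open Scope ring_scope.

(* Normalization of a nonzero polynomial to a monic associate:
   the ideal (P^n) of K[X] equals ((monicize P)^n). *)
Definition monicize (K : fieldType) (P : {poly K}) : {poly K} :=
  (lead_coef P)^-1 *: P.

(* The ring K[X]/(P^n) is rendered as {poly %/ (monicize P ^+ n)} (mathcomp qpoly). *)

Definition stabilizes_K (K : fieldType) (P1 P2 : {poly K}) (m : nat)
  (f : {poly %/ (monicize P1 ^+ m)} -> {poly %/ (monicize P2 ^+ m)}) : Prop :=
  exists sigma : {rmorphism K -> K}, bijective sigma /\
    forall a : K, f (in_qpoly (monicize P1 ^+ m) a%:P)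
                  = in_qpoly (monicize P2 ^+ m) (sigma a)%:P.

From HB Require Import structures.
From mathcomp Require Import all_boot all_algebra ring.
Set Implicit Arguments. Unset Strict Implicit. Unset Printing Implicit Defensive.
Import GRing.Theory.
Local Open Scope ring_scope.

(* Write q, p for the monic normalizations of P1, P2 and T := q^sigma.  Since f
   fixes constants up to sigma and sends X to R, it is A |-> A^sigma \Po R modulo
   p^m; reducing modulo p, the map H |-> H \Po R modulo p has kernel (T) and X in
   its image.  For any S with these two properties and p^2 not dividing T \Po S,
   the same formula A |-> A^sigma \Po S is an isomorphism K[X]/(q^n) -> K[X]/(p^n):
   injectivity by peeling off one factor T at a time, surjectivity by Hensel
   lifting an inverse of S modulo p.  If p^2 divides T \Po R, differentiating the
   inverse relations shows that p does not divide T' \Po R, so S := R + p works. *)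

Section PolyDivisibility.
Variable R : idomainType.
Implicit Types p a b u v A : {poly R}.

Lemma dvdp_comp_sub p (S1 S2 : {poly R}) A : p %| S1 - S2 -> p %| (A \Po S1) - (A \Po S2).
Proof.
move=> pS; elim/poly_ind: A => [|A c IH]; first by rewrite !comp_poly0 subrr dvdp0.
rewrite !comp_poly_MXaddC.
have -> : (A \Po S1) * S1 + c%:P - ((A \Po S2) * S2 + c%:P) =
  ((A \Po S1) - (A \Po S2)) * S1 + (A \Po S2) * (S1 - S2) by ring.
by apply: dvdp_add; [apply: dvdp_mulr | apply: dvdp_mull].
Qed.

Lemma sqr_dvdp_taylor A u v : v ^+ 2 %| (A \Po (u + v)) - (A \Po u) - (A^`() \Po u) * v.
Proof.
elim/poly_ind: A => [|A c IH]; first by rewrite deriv0 !comp_poly0 mul0r !subr0 dvdp0.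
rewrite derivMXaddC !comp_polyD !comp_polyM !comp_polyX !comp_polyC.
have -> : (A \Po (u + v)) * (u + v) + c%:P - ((A \Po u) * u + c%:P) -
    ((A \Po u) + (A^`() \Po u) * u) * v =
  ((A \Po (u + v)) - (A \Po u) - (A^`() \Po u) * v) * (u + v)
    + (A^`() \Po u) * v ^+ 2 by ring.
by apply: dvdp_add; [apply: dvdp_mulr | apply: dvdp_mull].
Qed.

Lemma dvdp_subX p a b n : p %| b -> p ^+ 2 %| a - b -> p ^+ n.+1 %| a ^+ n - b ^+ n.
Proof.
move=> pb pab; have pa : p %| a.
  by rewrite -(subrK b a) dvdp_add // (dvdp_trans _ pab) // dvdp_exp.
elim: n => [|n IH]; first by rewrite !expr0 subrr dvdp0.
have -> : a ^+ n.+1 - b ^+ n.+1 = a ^+ n * (a - b) + b * (a ^+ n - b ^+ n).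
  by rewrite !exprS; ring.
apply: dvdp_add; last by rewrite exprS dvdp_mul.
by rewrite -addn2 exprD dvdp_mul ?dvdp_exp2r.
Qed.

Lemma irredp_dvdpM p a b : irreducible_poly p -> (p %| a * b) = (p %| a) || (p %| b).
Proof.
move=> p_irr; have [pa|npa] /= := boolP (p %| a); first exact: dvdp_mulr.
by rewrite Gauss_dvdpr // irreducible_poly_coprime.
Qed.

Lemma irredp_dvdpX p a n : irreducible_poly p -> (0 < n)%N -> (p %| a ^+ n) = (p %| a).
Proof.
move=> p_irr; case: n => // n _; apply/idP/idP=> [|pa]; last by rewrite exprS dvdp_mulr.
elim: n => [|n IH]; first by rewrite expr1.
by rewrite exprS irredp_dvdpM // => /orP[//|/IH].
Qed.

End PolyDivisibility.

Section CompositionModulo.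
Variable R : idomainType.
Implicit Types p S T H : {poly R}.

Definition comp_ker_gen p S T := forall H, (p %| H \Po S) = (T %| H).

Definition comp_invertible_mod p S := exists G, p %| (G \Po S) - 'X.

Lemma dvdp_comp_congr p S S' H : p %| S' - S -> (p %| H \Po S') = (p %| H \Po S).
Proof.
move=> pS; rewrite -(subrK (H \Po S) (H \Po S')) dvdp_addr //.
exact: dvdp_comp_sub.
Qed.

Lemma comp_ker_gen_congr p S S' T :
  p %| S' - S -> comp_ker_gen p S T -> comp_ker_gen p S' T.
Proof. by move=> pS kerT H; rewrite (dvdp_comp_congr _ pS). Qed.

Lemma comp_invertible_mod_congr p S S' :
  p %| S' - S -> comp_invertible_mod p S -> comp_invertible_mod p S'.
Proof.
move=> pS [G pG]; exists G; rewrite -(subrK ((G \Po S) - 'X) (_ - 'X)) dvdp_addl //.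
by rewrite opprB addrA subrK dvdp_comp_sub.
Qed.

End CompositionModulo.

Section CompInverseModulo.
Variables (K : fieldType) (p S T G : {poly K}).
Hypotheses (p_irr : irreducible_poly p) (kerT : comp_ker_gen p S T)
  (invG : p %| (G \Po S) - 'X).

Let p_neq0 : p != 0. Proof. exact: irredp_neq0. Qed.

Lemma comp_invK A : p %| ((A \Po G) \Po S) - A.
Proof. by rewrite -comp_polyA -{2}(comp_polyXr A); apply: dvdp_comp_sub. Qed.

Lemma dvdp_comp_ker_gen : p %| T \Po S.
Proof. by rewrite kerT. Qed.

Section Separable.
Hypothesis sepT : ~~ (p ^+ 2 %| T \Po S).

Lemma comp_ker_gen_coprime : exists2 U, T \Po S = U * p & coprimep p U.
Proof.
have /dvdpP[U TSE] := dvdp_comp_ker_gen; exists U => //.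
rewrite irreducible_poly_coprime //; apply: contra sepT => pU.
by rewrite TSE expr2 dvdp_mul.
Qed.

Lemma comp_ker_genX n H : p ^+ n %| H \Po S -> T ^+ n %| H.
Proof.
have [U TSE pU] := comp_ker_gen_coprime.
elim: n H => [|n IH] H pH; first by rewrite dvd1p.
have /dvdpP[H' HE] : T %| H by rewrite -kerT (dvdp_trans _ pH) ?dvdp_exp.
move: pH; rewrite HE comp_polyM TSE exprSr mulrA dvdp_mul2r //.
by rewrite Gauss_dvdpl ?coprimep_expl // exprSr => /IH TnH'; exact: dvdp_mul TnH' (dvdpp T).
Qed.

Lemma comp_uniformizer : exists E, p %| E \Po S /\ p ^+ 2 %| p - (E \Po S).
Proof.
have [U TSE pU] := comp_ker_gen_coprime.
have [[u1 u2] /= Bezout] := Bezout_eq1_coprimepP _ _ pU.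
exists ((u2 \Po G) * T); rewrite comp_polyM; split.
  exact/dvdp_mull/dvdp_comp_ker_gen.
have -> : p - ((u2 \Po G) \Po S) * (T \Po S) =
    u1 * p ^+ 2 + (u2 - ((u2 \Po G) \Po S)) * (T \Po S).
  by rewrite TSE -{1}(mulr1 p) -Bezout; ring.
apply: dvdp_add; first exact: dvdp_mull.
rewrite expr2; apply: dvdp_mul; last exact: dvdp_comp_ker_gen.
by rewrite -dvdpNr opprB comp_invK.
Qed.

Lemma comp_invertible_modX n : exists Gn, p ^+ n %| (Gn \Po S) - 'X.
Proof.
have [E [pE pEp]] := comp_uniformizer.
(* Hensel step: if [Gn \Po S = 'X + V * p^n], then subtracting [E^n * (V \Po G)]
   removes the error modulo [p^(n+1)], as [E \Po S] is [p] modulo [p^2]. *)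
elim: n => [|n [Gn /dvdpP[V GnE]]]; first by exists 0; rewrite dvd1p.
exists (Gn - E ^+ n * (V \Po G)).
have -> : ((Gn - E ^+ n * (V \Po G)) \Po S) - 'X =
    V * (p ^+ n - (E \Po S) ^+ n) + (E \Po S) ^+ n * (V - ((V \Po G) \Po S)).
  rewrite comp_polyB comp_polyM rmorphXn /=.
  by rewrite -[Gn \Po S](subrK 'X) GnE; ring.
apply: dvdp_add; first by rewrite dvdp_mull // dvdp_subX.
rewrite exprSr; apply: dvdp_mul; first exact: dvdp_exp2r.
by rewrite -dvdpNr opprB comp_invK.
Qed.

End Separable.

Lemma dvdp_comp_inv_deriv : p ^+ 2 %| (p \Po G) \Po S -> p %| (G^`() \Po S) * S^`().
Proof.
move=> pG; have /dvdpP[W GSE] := invG.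
have GSE' : G \Po S = 'X + W * p by rewrite -GSE addrC subrK.
have p1W : p %| 1 + p^`() * W.
  suff : p ^+ 2 %| (1 + p^`() * W) * p by rewrite expr2 dvdp_mul2r.
  have taylor := sqr_dvdp_taylor p 'X (W * p).
  rewrite !comp_polyXr -GSE' comp_polyA in taylor.
  have -> : (1 + p^`() * W) * p = ((p \Po G) \Po S) -
      (((p \Po G) \Po S) - p - p^`() * (W * p)) by ring.
  by apply: dvdp_sub => //; apply: dvdp_trans taylor; rewrite exprMn dvdp_mull.
have -> : (G^`() \Po S) * S^`() = 1 + p^`() * W + W^`() * p.
  have := congr1 deriv GSE; rewrite derivB derivX deriv_comp derivM => dGSE.
  by rewrite -(subrK 1 (_ * _)) dGSE; ring.
by rewrite dvdp_addr ?dvdp_mull.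
Qed.

Lemma comp_ker_gen_deriv : p %| T^`() \Po S -> p %| S^`() * (G^`() \Po S) - 1.
Proof.
move=> pT'; have /dvdpP[M SGE] : T %| (S \Po G) - 'X.
  by rewrite -kerT comp_polyB comp_polyX comp_invK.
have dSGE : ((S^`() \Po G) \Po S) * (G^`() \Po S) - 1 =
    (M^`() \Po S) * (T \Po S) + (M \Po S) * (T^`() \Po S).
  have := congr1 (comp_poly S) (congr1 deriv SGE).
  rewrite derivB derivX deriv_comp derivM comp_polyB comp_polyD !comp_polyM.
  by rewrite -polyC1 comp_polyC.
have -> : S^`() * (G^`() \Po S) - 1 = ((S^`() \Po G) \Po S) * (G^`() \Po S) - 1
    - (((S^`() \Po G) \Po S) - S^`()) * (G^`() \Po S) by ring.
rewrite dSGE; apply: dvdp_sub; last exact/dvdp_mulr/comp_invK.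
by apply: dvdp_add; apply: dvdp_mull; rewrite ?dvdp_comp_ker_gen.
Qed.

Lemma comp_ker_gen_deriv_sep : p ^+ 2 %| T \Po S -> ~~ (p %| T^`() \Po S).
Proof.
move=> pT; apply/negP => /comp_ker_gen_deriv pSG.
have /dvdpP[N pGE] : T %| p \Po G.
  by rewrite -kerT -(dvdp_subl _ (dvdpp p)) comp_invK.
have /dvdp_comp_inv_deriv pGS : p ^+ 2 %| (p \Po G) \Po S.
  by rewrite pGE comp_polyM dvdp_mull.
have : p %| 1.
  have -> : 1 = (G^`() \Po S) * S^`() - (S^`() * (G^`() \Po S) - 1) by ring.
  exact: dvdp_sub.
by rewrite dvdp1 gtn_eqF //; case: p_irr.
Qed.

Lemma exists_comp_sep : exists S', p %| S' - S /\ ~~ (p ^+ 2 %| T \Po S').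
Proof.
have [pT|sepT] := boolP (p ^+ 2 %| T \Po S); last by exists S; rewrite subrr dvdp0.
exists (S + p); rewrite addrC addKr dvdpp; split => //.
apply: contra (comp_ker_gen_deriv_sep pT) => pTp.
suff : p ^+ 2 %| (T^`() \Po S) * p by rewrite expr2 dvdp_mul2r.
have -> : (T^`() \Po S) * p = (T \Po (S + p)) - (T \Po S) -
    ((T \Po (S + p)) - (T \Po S) - (T^`() \Po S) * p) by ring.
by apply: dvdp_sub; [apply: dvdp_sub | exact: sqr_dvdp_taylor].
Qed.

End CompInverseModulo.

Lemma inj_surj_bijective (aT : choiceType) (rT : eqType) (f : aT -> rT) :
  injective f -> (forall y, exists x, f x = y) -> bijective f.
Proof.
move=> f_inj f_surj; have ex y : exists x, f x == y by have [x <-] := f_surj y; exists x.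
by exists (fun y => xchoose (ex y)) => [x|y]; [apply: f_inj|]; apply/eqP/(xchooseP (ex _)).
Qed.

Section QpolyMonic.
Variables (R : idomainType) (h : {poly R}).
Hypotheses (h_monic : h \is monic) (h_gt1 : (1 < size h)%N).

Lemma mk_monic_id : mk_monic h = h.
Proof. by rewrite /mk_monic h_gt1 h_monic. Qed.

Lemma in_qpoly_val (x : {poly %/ h}) : in_qpoly h x = x.
Proof. exact/val_inj/in_qpoly_small/size_mk_monic. Qed.

Lemma in_qpoly_eq0 A : (in_qpoly h A == 0) = (h %| A).
Proof. by rewrite -val_eqE /= mk_monic_id -Pdiv.IdomainMonic.modpE. Qed.

End QpolyMonic.

Section QpolyComp.
Variables (K : fieldType) (sigma : {rmorphism K -> K}) (S h1 h2 : {poly K}).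
Hypotheses (h1_monic : h1 \is monic) (h1_gt1 : (1 < size h1)%N)
  (h2_monic : h2 \is monic) (h2_gt1 : (1 < size h2)%N)
  (h1S : h2 %| map_poly sigma h1 \Po S).

Let psi : {rmorphism {poly K} -> {poly %/ h2}} :=
  in_qpoly h2 \o comp_poly S \o map_poly sigma.

Let psi_mod A : psi (Pdiv.Ring.rmodp A (mk_monic h1)) = psi A.
Proof.
rewrite mk_monic_id //.
have psi_h1 : psi h1 = 0 by apply/eqP; rewrite in_qpoly_eq0.
by rewrite {2}(Pdiv.RingMonic.rdivp_eq h1_monic A) rmorphD rmorphM psi_h1 mulr0 add0r.
Qed.

Definition comp_qpoly (x : {poly %/ h1}) : {poly %/ h2} := psi x.

Lemma comp_qpolyE A : comp_qpoly (in_qpoly h1 A) = in_qpoly h2 (map_poly sigma A \Po S).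
Proof. exact: psi_mod. Qed.

Lemma comp_qpoly_is_zmod_morphism : zmod_morphism comp_qpoly.
Proof. by move=> x y; rewrite /comp_qpoly -rmorphB. Qed.

Lemma comp_qpoly_is_monoid_morphism : monoid_morphism comp_qpoly.
Proof.
split; first by rewrite /comp_qpoly qpolyCE rmorph1.
move=> x y; rewrite /comp_qpoly poly_of_qpolyM psi_mod.
exact: rmorphM.
Qed.

HB.instance Definition _ :=
  GRing.isZmodMorphism.Build _ _ comp_qpoly comp_qpoly_is_zmod_morphism.
HB.instance Definition _ :=
  GRing.isMonoidMorphism.Build _ _ comp_qpoly comp_qpoly_is_monoid_morphism.

Definition comp_qpoly_rmorphism : {rmorphism {poly %/ h1} -> {poly %/ h2}} :=
  comp_qpoly.

Lemma comp_qpoly_inj :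
  (forall H, h2 %| H \Po S -> map_poly sigma h1 %| H) -> injective comp_qpoly.
Proof.
move=> ker_h1; apply: raddf_inj => x; rewrite -[x]in_qpoly_val /= comp_qpolyE.
move/eqP; rewrite in_qpoly_eq0 // => /ker_h1; rewrite dvdp_map -in_qpoly_eq0 //.
by move/eqP.
Qed.

Lemma comp_qpoly_surj (sigma' : K -> K) : cancel sigma' sigma ->
  (exists G, h2 %| (G \Po S) - 'X) -> forall y, exists x, comp_qpoly x = y.
Proof.
move=> sigmaK [G h2G] y; rewrite -[y]in_qpoly_val //.
elim/poly_ind: (y : {poly K}) => [|A c [x xE]]; first by exists 0; rewrite !rmorph0.
exists (x * in_qpoly h1 (map_poly sigma' G) + in_qpoly h1 (sigma' c)%:P).
rewrite rmorphD rmorphM /= xE !comp_qpolyE map_polyC /= sigmaK comp_polyC.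
rewrite (map_polyK sigmaK) ?rmorph0 // -!rmorphM -rmorphD; apply/eqP.
by rewrite -subr_eq0 -rmorphB in_qpoly_eq0 // opprD addrACA subrr addr0 -mulrBr dvdp_mull.
Qed.

Lemma comp_qpoly_bijective (sigma' : K -> K) : cancel sigma' sigma ->
  (forall H, h2 %| H \Po S -> map_poly sigma h1 %| H) ->
  (exists G, h2 %| (G \Po S) - 'X) -> bijective comp_qpoly.
Proof.
by move=> sigmaK ker_h1 invS; apply: inj_surj_bijective;
  [apply: comp_qpoly_inj | apply: comp_qpoly_surj sigmaK invS].
Qed.

End QpolyComp.

Lemma qpoly_rmorphE (R : comNzRingType) (h1 h2 : {poly R})
    (f : {rmorphism {poly %/ h1} -> {poly %/ h2}}) (sigma : {rmorphism R -> R}) S :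
  (forall a, f (in_qpoly h1 a%:P) = in_qpoly h2 (sigma a)%:P) ->
  f (in_qpoly h1 'X) = in_qpoly h2 S ->
  forall A, f (in_qpoly h1 A) = in_qpoly h2 (map_poly sigma A \Po S).
Proof.
move=> fC fX; elim/poly_ind => [|A c IH]; first by rewrite !rmorph0.
by rewrite !rmorphD !rmorphM /= IH fX fC map_polyX map_polyC /= comp_polyX comp_polyC.
Qed.

Lemma size_exp_gt1 (R : idomainType) (p : {poly R}) n :
  (1 < size p)%N -> (0 < n)%N -> (1 < size (p ^+ n))%N.
Proof.
by move=> p_gt1 n_gt0; rewrite -ltn_predRL size_exp muln_gt0 n_gt0 andbT ltn_predRL.
Qed.

Lemma eqp_irredp (R : idomainType) (p q : {poly R}) :
  p %= q -> irreducible_poly q -> irreducible_poly p.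
Proof.
move=> pq [q_gt1 q_irr]; split=> [|d d_neq1]; first by rewrite (eqp_size pq).
rewrite (eqp_dvdr _ pq) => dq.
by apply: eqp_trans (q_irr _ d_neq1 dq) _; rewrite eqp_sym.
Qed.

Section Monicize.
Variables (K : fieldType) (P : {poly K}).
Hypothesis P_irr : irreducible_poly P.

Lemma monicize_monic : monicize P \is monic.
Proof. by rewrite monicE lead_coefZ mulVf // lead_coef_eq0 irredp_neq0. Qed.

Lemma monicize_irr : irreducible_poly (monicize P).
Proof.
by apply: eqp_irredp P_irr; rewrite eqp_scale // invr_eq0 lead_coef_eq0 irredp_neq0.
Qed.

End Monicize.

Section QpolyIsoComp.
Variables (K : fieldType) (sigma : {rmorphism K -> K}) (q p R : {poly K}) (m : nat).
Hypotheses (q_irr : irreducible_poly q) (p_irr : irreducible_poly p)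
  (q_monic : q \is monic) (p_monic : p \is monic) (m_gt0 : (0 < m)%N).
Variable f : {rmorphism {poly %/ q ^+ m} -> {poly %/ p ^+ m}}.
Hypothesis fE : forall A, f (in_qpoly (q ^+ m) A) = in_qpoly (p ^+ m) (map_poly sigma A \Po R).

Let qm_monic := monic_exp m q_monic.
Let pm_monic := monic_exp m p_monic.
Let qm_gt1 := size_exp_gt1 q_irr.1 m_gt0.
Let pm_gt1 := size_exp_gt1 p_irr.1 m_gt0.

Let in_qpoly_qm : in_qpoly (q ^+ m) (q ^+ m) = 0.
Proof. by apply/eqP; rewrite in_qpoly_eq0. Qed.

Lemma qpoly_iso_dvdp_comp : p %| map_poly sigma q \Po R.
Proof.
have /esym/eqP := fE (q ^+ m); rewrite in_qpoly_qm rmorph0 in_qpoly_eq0 // !rmorphXn /=.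
by move=> /(dvdp_trans (dvdp_exp m_gt0 (dvdpp p))); rewrite irredp_dvdpX.
Qed.

Lemma qpoly_iso_comp_ker (sigma' : K -> K) : cancel sigma' sigma -> injective f ->
  comp_ker_gen p R (map_poly sigma q).
Proof.
move=> sigmaK f_inj H; apply/idP/idP => [pH|/dvdpP[N ->]]; last first.
  by rewrite comp_polyM dvdp_mull // qpoly_iso_dvdp_comp.
have HE : map_poly sigma (map_poly sigma' H) = H by rewrite (map_polyK sigmaK) ?rmorph0.
suff /eqP : in_qpoly (q ^+ m) (map_poly sigma' H ^+ m) = 0.
  rewrite in_qpoly_eq0 // => /(dvdp_trans (dvdp_exp m_gt0 (dvdpp q))).
  by rewrite irredp_dvdpX // -(dvdp_map sigma) HE.
apply: f_inj; rewrite fE rmorph0 !rmorphXn /= HE.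
by apply/eqP; rewrite -rmorphXn in_qpoly_eq0 // dvdp_exp2r.
Qed.

Lemma qpoly_iso_comp_invertible (g : {poly %/ p ^+ m} -> {poly %/ q ^+ m}) :
  cancel g f -> comp_invertible_mod p R.
Proof.
move=> gK; exists (map_poly sigma (g (in_qpoly (p ^+ m) 'X))).
have /eqP := fE (g (in_qpoly (p ^+ m) 'X)); rewrite in_qpoly_val gK eq_sym.
rewrite -subr_eq0 -rmorphB in_qpoly_eq0 //; apply: dvdp_trans.
exact: dvdp_exp (dvdpp p).
Qed.

End QpolyIsoComp.

Lemma exists_qpoly_iso_comp (K : fieldType) (sigma : {rmorphism K -> K}) (sigma' : K -> K)
    (q p S : {poly K}) n :
  cancel sigma' sigma -> irreducible_poly q -> irreducible_poly p ->
  q \is monic -> p \is monic ->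
  comp_ker_gen p S (map_poly sigma q) -> comp_invertible_mod p S ->
  ~~ (p ^+ 2 %| map_poly sigma q \Po S) -> (0 < n)%N ->
  exists g : {rmorphism {poly %/ q ^+ n} -> {poly %/ p ^+ n}}, bijective g.
Proof.
move=> sigmaK q_irr p_irr q_monic p_monic kerS [G invG] sepS n_gt0.
have qn_monic := monic_exp n q_monic; have pn_monic := monic_exp n p_monic.
have qn_gt1 := size_exp_gt1 q_irr.1 n_gt0; have pn_gt1 := size_exp_gt1 p_irr.1 n_gt0.
have qnS : p ^+ n %| map_poly sigma (q ^+ n) \Po S.
  by rewrite !rmorphXn /= dvdp_exp2r // (dvdp_comp_ker_gen kerS).
exists (comp_qpoly_rmorphism qn_monic qn_gt1 pn_monic pn_gt1 qnS).
apply: (comp_qpoly_bijective qn_monic qn_gt1 pn_monic pn_gt1 qnS sigmaK).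
- by move=> H; rewrite rmorphXn; apply: comp_ker_genX.
- exact: (comp_invertible_modX p_irr kerS invG sepS n).
Qed.

Unset Implicit Arguments.

Theorem mainTheorem15 (K : fieldType) (P1 P2 : {poly K}) (m : nat)
  (f : {rmorphism {poly %/ (monicize P1 ^+ m)} -> {poly %/ (monicize P2 ^+ m)}})
  (R : {poly K}) :
  irreducible_poly P1 -> irreducible_poly P2 -> (1 <= m)%N ->
  bijective f -> stabilizes_K f ->
  f (in_qpoly (monicize P1 ^+ m) 'X) = in_qpoly (monicize P2 ^+ m) R ->
  (R %% P2)^`() != 0 ->
  forall n : nat, (1 <= n)%N ->
    exists g : {rmorphism {poly %/ (monicize P1 ^+ n)} -> {poly %/ (monicize P2 ^+ n)}},
      bijective g.
Proof.
move=> P1_irr P2_irr m_gt0 [f' fK f'K] [sigma [[sigma' _ sigmaK] fC]] fX _ n n_gt0.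
have [q_irr p_irr] := (monicize_irr P1_irr, monicize_irr P2_irr).
have [q_monic p_monic] := (monicize_monic P1_irr, monicize_monic P2_irr).
have fE := qpoly_rmorphE fC fX.
have kerR := qpoly_iso_comp_ker q_irr p_irr q_monic p_monic m_gt0 fE sigmaK (can_inj fK).
have [G invG] := qpoly_iso_comp_invertible p_irr p_monic m_gt0 fE f'K.
have [S [pSR sepS]] := exists_comp_sep p_irr kerR invG.
apply: (exists_qpoly_iso_comp sigmaK q_irr p_irr q_monic p_monic _ _ sepS n_gt0).
- exact: comp_ker_gen_congr pSR kerR.
- by apply: comp_invertible_mod_congr pSR _; exists G.
Qed.
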